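(* Let $X$ be a rack and let $\mathcal T_2=\{0,1\}$ be the trivial rack on two elements. Then the pair $(X,\mathcal T_2)$ is productive, i.e. the homomorphism $\Gamma'_{X\times\mathcal T_2}\to\Gamma'_X\times\Gamma'_{\mathcal T_2}$ induced on commutator subgroups by the natural homomorphism $\Gamma_{X\times\mathcal T_2}\to\Gamma_X\times\Gamma_{\mathcal T_2}$ is injective.
   Context: A rack is a set $X$ with an operation $x^y$ such that $x\mapsto x^y$ is bijective for each $y$ and $(z^x)^y=(z^y)^{x^y}$. The trivial rack $\mathcal T_2$ has $a^b=a$. The product rack $X\times Y$ has $(x,a)^{(y,b)}=(x^y,a^b)$. The structure group is $\Gamma_X=\langle X\mid y^{-1}xy=x^y\text{ for all }x,y\in X\rangle$, functorial in rack morphisms; $\Gamma'$ denotes the commutator subgroup. *)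

From mathcomp Require Import all_boot.
Set Implicit Arguments. Unset Strict Implicit. Unset Printing Implicit Defensive.

Definition is_rack (X : Type) (op : X -> X -> X) : Prop :=
  (forall y, bijective (fun x => op x y)) /\
  (forall x y z, op (op z x) y = op (op z y) (op x y)).

Definition trivial_op (a b : bool) : bool := a.

Definition prod_op (X Y : Type) (opX : X -> X -> X) (opY : Y -> Y -> Y)
  (p q : X * Y) : X * Y := (opX p.1 q.1, opY p.2 q.2).

(* Words in the free group on X: a letter (x, false) is x, (x, true) is x^-1. *)
Definition word (X : Type) := seq (X * bool).

Definition winv (X : Type) (w : word X) : word X :=
  rev (map (fun l => (l.1, ~~ l.2)) w).

Definition wcomm (X : Type) (u v : word X) : word X :=
  winv u ++ winv v ++ u ++ v.

(* The structure group Gamma_X = < X | y^-1 x y = x^y > : two words are equal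
   in Gamma_X iff they are related by the congruence generated by free
   cancellation and the defining relations. *)
Inductive gamma_eq (X : Type) (op : X -> X -> X) : word X -> word X -> Prop :=
| geq_refl w : gamma_eq op w w
| geq_sym u v : gamma_eq op u v -> gamma_eq op v u
| geq_trans u v w : gamma_eq op u v -> gamma_eq op v w -> gamma_eq op u w
| geq_ctx a b u v : gamma_eq op u v -> gamma_eq op (a ++ u ++ b) (a ++ v ++ b)
| geq_cancel x s : gamma_eq op [:: (x, s); (x, ~~ s)] [::]
| geq_rel x y : gamma_eq op [:: (y, true); (x, false); (y, false)] [:: (op x y, false)].

Inductive in_comm (X : Type) (op : X -> X -> X) : word X -> Prop :=
| comm_one : in_comm op [::]
| comm_gen u v : in_comm op (wcomm u v)
| comm_mul u v : in_comm op u -> in_comm op v -> in_comm op (u ++ v)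
| comm_inv u : in_comm op u -> in_comm op (winv u)
| comm_eq u v : gamma_eq op u v -> in_comm op u -> in_comm op v.

Definition wmap (X Y : Type) (f : X -> Y) (w : word X) : word Y :=
  map (fun l => (f l.1, l.2)) w.

(* In Gamma_{X x T2} the generators (x,1) and (x,0) act by the same conjugation
   (y,a) |-> (y^x,a), so the twist (x,1)(x,0)^-1 is central.  Hence every word
   is, up to a central factor, the lift of its X-projection along x |-> (x,0);
   central factors cancel in commutators, so on the commutator subgroup the
   lift of the X-projection is the identity. *)
From mathcomp Require Import all_boot.
Set Implicit Arguments. Unset Strict Implicit. Unset Printing Implicit Defensive.

Lemma winv_cat (Y : Type) (u v : word Y) : winv (u ++ v) = winv v ++ winv u.
Proof. by rewrite /winv map_cat rev_cat. Qed.

Lemma winv_cons (Y : Type) (l : Y * bool) (w : word Y) :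
  winv (l :: w) = winv w ++ [:: (l.1, ~~ l.2)].
Proof. by rewrite -cat1s winv_cat. Qed.

Lemma wmap_cat (A B : Type) (f : A -> B) (u v : word A) :
  wmap f (u ++ v) = wmap f u ++ wmap f v.
Proof. exact: map_cat. Qed.

Lemma wmap_winv (A B : Type) (f : A -> B) (w : word A) :
  wmap f (winv w) = winv (wmap f w).
Proof. by rewrite /wmap /winv map_rev -!map_comp. Qed.

Lemma wmap_wcomm (A B : Type) (f : A -> B) (u v : word A) :
  wmap f (wcomm u v) = wcomm (wmap f u) (wmap f v).
Proof. by rewrite /wcomm !wmap_cat !wmap_winv. Qed.

Lemma gamma_eq_wmap (A B : Type) (oA : A -> A -> A) (oB : B -> B -> B)
    (f : A -> B) (u v : word A) :
  (forall x y, f (oA x y) = oB (f x) (f y)) ->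
  gamma_eq oA u v -> gamma_eq oB (wmap f u) (wmap f v).
Proof.
move=> f_morph; elim=> {u v} [w | u v _ | u v w _ IHuv _ IHvw | a b u v _ IHuv | x s | x y].
- exact: geq_refl.
- exact: geq_sym.
- exact: geq_trans IHuv IHvw.
- by rewrite !wmap_cat; exact: geq_ctx.
- exact: geq_cancel.
- by rewrite /wmap /= f_morph; exact: geq_rel.
Qed.

Section StructureGroup.
Variables (Y : Type) (o : Y -> Y -> Y).
Local Notation G := (gamma_eq o).

Lemma gamma_eq_catl a u v : G u v -> G (a ++ u) (a ++ v).
Proof. by move=> Huv; have := geq_ctx a [::] Huv; rewrite !cats0. Qed.

Lemma gamma_eq_catr b u v : G u v -> G (u ++ b) (v ++ b).
Proof. exact: geq_ctx [::] b u v. Qed.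

Lemma gamma_eq_cat u v u' v' : G u u' -> G v v' -> G (u ++ v) (u' ++ v').
Proof. by move=> Hu Hv; apply: geq_trans (gamma_eq_catr _ Hu) (gamma_eq_catl _ Hv). Qed.

Lemma gamma_eq_mulwV w : G (w ++ winv w) [::].
Proof.
elim: w => [|[x s] w IHw]; first exact: geq_refl.
have Hmid := geq_ctx [:: (x, s)] [:: (x, ~~ s)] IHw.
rewrite winv_cons /= -catA /= in Hmid *.
exact: geq_trans Hmid (geq_cancel o x s).
Qed.

Lemma gamma_eq_mulVw w : G (winv w ++ w) [::].
Proof.
elim: w => [|[x s] w IHw]; first exact: geq_refl.
have Hmid := geq_ctx (winv w) w (geq_cancel o x (~~ s)).
rewrite negbK /= in Hmid.
by rewrite winv_cons -catA; exact: geq_trans Hmid IHw.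
Qed.

Lemma gamma_eq_cancelwV a w b : G (a ++ w ++ winv w ++ b) (a ++ b).
Proof. by have := geq_ctx a b (gamma_eq_mulwV w); rewrite -catA. Qed.

Lemma gamma_eq_cancelVw a w b : G (a ++ winv w ++ w ++ b) (a ++ b).
Proof. by have := geq_ctx a b (gamma_eq_mulVw w); rewrite -catA. Qed.

Lemma gamma_eq_winv u v : G u v -> G (winv u) (winv v).
Proof.
move=> Huv.
have := gamma_eq_cancelwV (winv u) v [::]; rewrite !cats0 => Hu.
apply: geq_trans (geq_sym Hu) _.
apply: geq_trans (gamma_eq_catl _ (gamma_eq_catr _ (geq_sym Huv))) _.
exact: gamma_eq_cancelVw [::] u (winv v).
Qed.

Lemma gamma_eq_wcomm u v u' v' : G u u' -> G v v' -> G (wcomm u v) (wcomm u' v').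
Proof.
move=> Hu Hv; rewrite /wcomm.
exact: gamma_eq_cat (gamma_eq_winv Hu) (gamma_eq_cat (gamma_eq_winv Hv) (gamma_eq_cat Hu Hv)).
Qed.

Lemma gamma_eq_mul_gen x y :
  G [:: (x, false); (y, false)] [:: (y, false); (o x y, false)].
Proof.
apply: geq_trans (geq_ctx [:: (y, false)] [::] (geq_rel o x y)).
exact: geq_sym (gamma_eq_cancelwV [::] [:: (y, false)] [:: (x, false); (y, false)]).
Qed.

Lemma gamma_eq_mulV_gen x y :
  G [:: (y, true); (x, false)] [:: (o x y, false); (y, true)].
Proof.
apply: geq_trans (geq_ctx [::] [:: (y, true)] (geq_rel o x y)).
exact: geq_sym (gamma_eq_cancelwV [:: (y, true); (x, false)] [:: (y, false)] [::]).
Qed.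

Definition central (c : word Y) := forall v, G (c ++ v) (v ++ c).

Lemma central_nil : central [::].
Proof. by move=> v; rewrite cats0; exact: geq_refl. Qed.

Lemma central_cat c d : central c -> central d -> central (c ++ d).
Proof.
move=> Cc Cd v; rewrite -catA.
apply: geq_trans (gamma_eq_catl c (Cd v)) _.
by rewrite !catA; exact: gamma_eq_catr.
Qed.

Lemma gamma_eq_commute_winv a b : G (a ++ b) (b ++ a) -> G (a ++ winv b) (winv b ++ a).
Proof.
move=> Hab.
have H := gamma_eq_catl (winv b) (gamma_eq_catr (winv b) Hab).
rewrite -!catA in H.
apply: geq_trans (geq_sym (gamma_eq_cancelVw [::] b (a ++ winv b))) _.
apply: geq_trans (geq_sym H) _.
by have := gamma_eq_cancelwV (winv b ++ a) b [::]; rewrite -!catA !cats0.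
Qed.

Lemma central_winv c : central c -> central (winv c).
Proof. by move=> Cc v; apply: geq_sym; apply: gamma_eq_commute_winv; apply: geq_sym. Qed.

Lemma central_of_gens c :
  (forall y, G (c ++ [:: (y, false)]) ((y, false) :: c)) -> central c.
Proof.
move=> Cgen.
have Cletter l : G (c ++ [:: l]) (l :: c).
  case: l => y [|]; last exact: Cgen.
  exact: gamma_eq_commute_winv (Cgen y).
elim=> [|l v IHv]; first by rewrite cats0; exact: geq_refl.
have := gamma_eq_catr v (Cletter l); rewrite -catA /= => Hl.
exact: geq_trans Hl (gamma_eq_catl [:: l] IHv).
Qed.

Lemma central_cancel c a u b : central c -> G (a ++ winv c ++ u ++ c ++ b) (a ++ u ++ b).
Proof.
move=> Cc; apply: gamma_eq_catl.
have := gamma_eq_catr (c ++ b) (central_winv Cc u); rewrite -!catA => Hu.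
exact: geq_trans Hu (gamma_eq_cancelVw u c b).
Qed.

Lemma wcomm_central k a m b :
  central k -> central m -> G (wcomm (k ++ a) (m ++ b)) (wcomm a b).
Proof.
move=> Ck Cm; rewrite /wcomm !winv_cat -!catA.
have := central_cancel (winv a) (winv b ++ winv m) (a ++ m ++ b) Ck.
rewrite -!catA => Hk; apply: geq_trans Hk _.
by have := central_cancel (winv a ++ winv b) a b Cm; rewrite -!catA.
Qed.

End StructureGroup.

Section ProductWithTrivialRack.
Variables (X : Type) (op : X -> X -> X).
Local Notation P := (prod_op op trivial_op).
Local Notation G := (gamma_eq P).
Local Notation lift0 := (wmap (fun x : X => (x, false))).
Local Notation proj1 := (wmap (fun p : X * bool => p.1)).

Lemma gamma_eq_lift0 u v : gamma_eq op u v -> G (lift0 u) (lift0 v).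
Proof. exact: gamma_eq_wmap. Qed.

Lemma gamma_eq_proj1 u v : G u v -> gamma_eq op (proj1 u) (proj1 v).
Proof. exact: gamma_eq_wmap. Qed.

Definition twist (x : X) : word (X * bool) := [:: ((x, true), false); ((x, false), true)].

Lemma central_twist x : central P (twist x).
Proof.
apply: central_of_gens => g.
have Hconj0 := geq_ctx [:: ((x, true), false)] [::] (gamma_eq_mulV_gen P g (x, false)).
have Hconj1 := geq_ctx [::] [:: ((x, false), true)] (gamma_eq_mul_gen P g (x, true)).
exact: geq_trans Hconj0 (geq_sym Hconj1).
Qed.

Definition splits (w : word (X * bool)) := exists2 k, central P k & G w (k ++ lift0 (proj1 w)).

Lemma splits_cat u v : splits u -> splits v -> splits (u ++ v).
Proof.
move=> [k Ck Hu] [m Cm Hv]; exists (k ++ m); first exact: central_cat.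
apply: geq_trans (gamma_eq_cat Hu Hv) _.
rewrite !wmap_cat -!catA; apply: gamma_eq_catl; rewrite !catA.
exact: gamma_eq_catr _ (geq_sym (Cm _)).
Qed.

Lemma splits_winv w : splits w -> splits (winv w).
Proof.
move=> [k Ck Hw]; exists (winv k); first exact: central_winv.
apply: geq_trans (gamma_eq_winv Hw) _.
rewrite winv_cat !wmap_winv; exact: geq_sym (central_winv Ck _).
Qed.

Lemma splits_gen x a : splits [:: ((x, a), false)].
Proof.
case: a; last by exists [::]; [exact: central_nil | exact: geq_refl].
exists (twist x); first exact: central_twist.
by have /geq_sym := gamma_eq_cancelVw P [:: ((x, true), false)] [:: ((x, false), false)] [::].
Qed.

Lemma splits_all w : splits w.
Proof.
elim: w => [|[[x a] e] w IHw]; first by exists [::]; [exact: central_nil | exact: geq_refl].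
apply: (splits_cat (u := [:: _])) IHw.
case: e; last exact: splits_gen.
exact: splits_winv (splits_gen x a).
Qed.

Lemma in_comm_lift0_proj1 w : in_comm P w -> G w (lift0 (proj1 w)).
Proof.
elim=> {w} [|u v|u v _ IHu _ IHv|u _ IHu|u v Huv _ IHu].
- exact: geq_refl.
- have [k Ck Hu] := splits_all u; have [m Cm Hv] := splits_all v.
  rewrite !wmap_wcomm.
  exact: geq_trans (gamma_eq_wcomm Hu Hv) (wcomm_central _ _ Ck Cm).
- by rewrite !wmap_cat; exact: gamma_eq_cat.
- by rewrite !wmap_winv; exact: gamma_eq_winv.
- apply: geq_trans (geq_sym Huv) (geq_trans IHu _).
  exact: gamma_eq_lift0 (gamma_eq_proj1 Huv).
Qed.

End ProductWithTrivialRack.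

Theorem proposition4p26 (X : Type) (op : X -> X -> X) (HX : is_rack op)
  (w1 w2 : word (prod X bool)) :
  in_comm (prod_op op trivial_op) w1 ->
  in_comm (prod_op op trivial_op) w2 ->
  gamma_eq op (wmap (fun p : prod X bool => p.1) w1) (wmap (fun p : prod X bool => p.1) w2) ->
  gamma_eq trivial_op (wmap (fun p : prod X bool => p.2) w1) (wmap (fun p : prod X bool => p.2) w2) ->
  gamma_eq (prod_op op trivial_op) w1 w2.
Proof.
move=> Hw1 Hw2 Hproj1 _.
apply: geq_trans (in_comm_lift0_proj1 Hw1) _.
apply: geq_trans (geq_sym (in_comm_lift0_proj1 Hw2)).
exact: gamma_eq_lift0 Hproj1.
Qed.
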